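(* Let $S$ be the curve obtained from $\mathbb{P}^1$ by identifying the three points $0,1,\infty$ into a single (ordinary triple) point, and let $M_O$ be the moduli space of line bundles $L$ on $S$ whose pullback to $\mathbb{P}^1$ has degree $-1$. Identify $M_O$ with $(\mathbb{C}^* )^3/\mathbb{C}^*\subset\mathbb{P}^2=\bar M_O$, where (after fixing a trivialization over the triple point and viewing the pullback $\mathcal{O}(-1)$ as the tautological bundle) the three homogeneous coordinates record the gluing data of $L$ at the points $0,1,\infty$. Then the closure $Z\subset\bar M_O$ of the locus of those $L$ for which there exists a (unique) point $x$ with $L(x)\simeq\mathcal{O}_S$ is a quadric (conic) in $\mathbb{P}^2$ passing through the three coordinate points.
   Context: Here $L(x)$ denotes $L\otimes\mathcal{O}_S(x)$ for a smooth point $x$ of $S$. The identification $M_O\cong(\mathbb{C}^* )^3/\mathbb{C}^*$: a line bundle of degree $-1$ on $S$ is $\mathcal{O}_{\mathbb{P}^1}(-1)$ together with identifications of its fibers over $0,1,\infty$ with a common line; choosing these identifications amounts to choosing one nonzero vector on each of the three tautological lines over $0,1,\infty$, up to common scaling. *)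

From HB Require Import structures.
From mathcomp Require Import all_boot all_order all_algebra.
From mathcomp Require Import mpoly.
From mathcomp Require Import complex.
Set Implicit Arguments. Unset Strict Implicit. Unset Printing Implicit Defensive.
Import Order.TTheory GRing.Theory Num.Theory.
Local Open Scope ring_scope.

Section Model.
Variable F : fieldType.

(* A point of P^1 is given by a nonzero representative (x0, x1) in F^2,
   i.e. the point [x0 : x1]; the tautological line over it is F*(x0,x1). *)
Definition P1rep := (F * F)%type.
Definition is_P1rep (x : P1rep) : bool := (x.1 != 0) || (x.2 != 0).
Definition samept (x y : P1rep) : bool := x.1 * y.2 == x.2 * y.1.
Definition scl (k : F) (p : P1rep) : P1rep := (k * p.1, k * p.2).

(* the three special points 0 = [0:1], 1 = [1:1], oo = [1:0],
   indexed by 'I_3 (0 -> 0, 1 -> 1, 2 -> oo), with fixed representatives *)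
Definition special (i : 'I_3) : P1rep :=
  match val i with 0 => (0, 1) | 1 => (1, 1) | _ => (1, 0) end.

Definition smooth_pt (x : P1rep) : bool :=
  is_P1rep x && [forall i : 'I_3, ~~ samept x (special i)].

(* Gluing data of L in M_O: a nonzero vector v_i = a_i * special i on the
   tautological line over each special point (identified with 1 in the
   common line of the triple point). *)
Definition glue_ok (a : 'I_3 -> F) : Prop := forall i, a i != 0.

(* Global sections of O_{P^1}(-1)(x), x = [x0:x1]: the meromorphic sections
   of the tautological bundle with at most a simple pole at x, namely
   p |-> (c / (x1 p0 - x0 p1)) * p  for c in F (defined for p not at x). *)
Definition sect (x : P1rep) (c : F) (p : P1rep) : P1rep :=
  scl (c / (x.2 * p.1 - x.1 * p.2)) p.

(* L(x) ~ O_S : the pullback O(-1)(x) has a nonzero section which descends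
   to S, i.e. whose values at 0, 1, oo correspond to the same element
   lambda of the common fibre under the gluing v_i <-> 1.  (A nonzero
   section of a degree 0 bundle whose pullback is O_{P^1} is nowhere zero.) *)
Definition twist_trivial (a : 'I_3 -> F) (x : P1rep) : Prop :=
  exists c lam : F, c != 0 /\
    forall i : 'I_3, sect x c (special i) = scl lam (scl (a i) (special i)).

(* The locus in (F^x)^3 (the cone over M_O in P^2) of L for which
   some smooth x has L(x) ~ O_S. *)
Definition locus (a : 'I_3 -> F) : Prop :=
  glue_ok a /\ exists x, smooth_pt x /\ twist_trivial a x.

Definition in_closure (p : 'I_3 -> F) : Prop :=
  forall G : {mpoly F[3]}, (forall a, locus a -> G.@[a] = 0) -> G.@[p] = 0.

Definition nonzero3 (p : 'I_3 -> F) : Prop := exists i, p i != 0.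

Definition coordpt (i : 'I_3) : 'I_3 -> F := fun j => (i == j)%:R.

End Model.

From HB Require Import structures.
From mathcomp Require Import all_boot all_order all_algebra.
From mathcomp Require Import mpoly.
From mathcomp Require Import complex.
From mathcomp Require Import ring.
Import GRing.Theory Num.Theory.
Set Implicit Arguments. Unset Strict Implicit. Unset Printing Implicit Defensive.
Local Open Scope ring_scope.

(* The section of O(-1)(x) descends to S iff a_i * l_i(x) is a nonzero constant,
   where l_i(x) = wedge x (special i) is the linear form vanishing at the i-th
   special point.  Since l_1 = l_0 + l_2, this forces 1/a_1 = 1/a_0 + 1/a_2, i.e.
   the conic a_0 a_2 = a_1 (a_0 + a_2), and x is recovered from
   l_0(x) : l_2(x) = a_2 : a_0.  Conversely the locus is the image of the smooth
   points under the Cremona map l |-> (l_1 l_2, l_0 l_2, l_0 l_1), and every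
   nonzero point of the conic is such an image up to scaling, the coordinate
   points being the images of the special points.  Moving x along a line gives
   a polynomial curve lying in the locus for all but finitely many parameters,
   so a polynomial vanishing on the locus vanishes on the whole conic. *)

Lemma ord3_ind (P : 'I_3 -> Prop) : P 0 -> P 1 -> P 2 -> forall i, P i.
Proof.
move=> P0 P1 P2 [[|[|[|k]]] lt_i3] //.
- by rewrite (_ : Ordinal _ = 0) //; apply: val_inj.
- by rewrite (_ : Ordinal _ = 1) //; apply: val_inj.
- by rewrite (_ : Ordinal _ = 2) //; apply: val_inj.
Qed.

Definition cremona {R : comPzRingType} (w : 'I_3 -> R) : 'I_3 -> R :=
  fun i => \prod_(j | j != i) w j.

Lemma cremonaE (R : comPzRingType) (w : 'I_3 -> R) :
  [/\ cremona w 0 = w 1 * w 2, cremona w 1 = w 0 * w 2 & cremona w 2 = w 0 * w 1].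
Proof.
by split; rewrite /cremona big_mkcond !big_ord_recl big_ord0 /= ?mul1r ?mulr1;
  congr (w _ * w _); apply: val_inj.
Qed.

Lemma cremona_mul (R : comPzRingType) (w : 'I_3 -> R) i :
  cremona w i * w i = \prod_j w j.
Proof. by rewrite [RHS](bigD1 i) //= mulrC. Qed.

Lemma horner_cremona (R : comNzRingType) (w : 'I_3 -> {poly R}) t i :
  (cremona w i).[t] = cremona (fun j => (w j).[t]) i.
Proof. exact: horner_prod. Qed.

Lemma horner_mmap (R : comNzRingType) n (G : {mpoly R[n]}) (g : 'I_n -> {poly R}) t :
  (mmap polyC g G).[t] = G.@[fun i => (g i).[t]].
Proof.
rewrite /mmap mevalE horner_sum; apply: eq_bigr => m _.
rewrite hornerCM /mmap1 horner_prod; congr (_ * _).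
by apply: eq_bigr => i _; rewrite horner_exp.
Qed.

Section Twists.
Variable F : fieldType.
Implicit Types (a p : 'I_3 -> F) (x y : P1rep F).

Definition wedge x y : F := x.2 * y.1 - x.1 * y.2.

(* wedge x (special F i) is the denominator of sect x at the special point i *)
Definition wedge_special x : 'I_3 -> F := fun i => wedge x (special F i).

Lemma samept_wedge x y : samept x y = (wedge x y == 0).
Proof. by rewrite /samept /wedge subr_eq0 eq_sym. Qed.

Lemma wedge_specialE x :
  [/\ wedge_special x 0 = - x.1, wedge_special x 1 = x.2 - x.1
    & wedge_special x 2 = x.2].
Proof. by split; rewrite /wedge_special /wedge /= ?mulr0 ?mulr1 ?sub0r ?subr0. Qed.

Lemma wedge_special_add x :
  wedge_special x 1 = wedge_special x 0 + wedge_special x 2.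
Proof. by have [-> -> ->] := wedge_specialE x; rewrite addrC. Qed.

Lemma smooth_ptP x : reflect (forall i, wedge_special x i != 0) (smooth_pt x).
Proof.
apply: (iffP andP) => [[_ /forallP nsame] i | w_neq0].
  by rewrite /wedge_special -samept_wedge nsame.
split; last by apply/forallP => i; rewrite samept_wedge w_neq0.
by have := w_neq0 0; have [-> _ _] := wedge_specialE x; rewrite oppr_eq0 /is_P1rep => ->.
Qed.

Lemma scl_special_inj i u v : scl u (special F i) = scl v (special F i) -> u = v.
Proof.
by case: i => -[|[|k]] lt_i3; rewrite /scl /special /= => -[]; rewrite ?mulr0 ?mulr1.
Qed.

Lemma twist_trivialP a x : smooth_pt x ->
  twist_trivial a x <-> exists2 mu, mu != 0 & forall i, a i * wedge_special x i = mu.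
Proof.
move=> /smooth_ptP w_neq0; split=> [[c [lam [c_neq0 sectE]]] | [mu mu_neq0 aw]].
  have lam_a i : c / wedge_special x i = lam * a i.
    by apply: (@scl_special_inj i); rewrite [LHS]sectE /scl /= !mulrA.
  have lam_neq0 : lam != 0.
    apply: contraNneq (mulf_neq0 c_neq0 (invr_neq0 (w_neq0 0))) => lam0.
    by rewrite lam_a lam0 mul0r.
  exists (c / lam) => [|i]; first by rewrite mulf_neq0 ?invr_eq0.
  by rewrite -[a i](mulKf lam_neq0) -lam_a -mulrA divfK // mulrC.
exists mu, 1; split=> // i.
by rewrite /sect -(aw i) mulfK // /scl /= !mul1r.
Qed.

Lemma eq_locus a b : a =1 b -> locus b -> locus a.
Proof.
move=> ab [b_neq0 [x [x_smooth [c [lam [c_neq0 sectE]]]]]].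
split=> [i | ]; first by rewrite ab.
by exists x; split=> //; exists c, lam; split=> // i; rewrite ab.
Qed.

Lemma locus_twist a x mu : smooth_pt x -> mu != 0 ->
  (forall i, a i * wedge_special x i = mu) -> locus a.
Proof.
move=> x_smooth mu_neq0 aw; split=> [i | ].
  by apply: contraNneq mu_neq0 => ai0; rewrite -(aw i) ai0 mul0r.
by exists x; split=> //; apply/twist_trivialP => //; exists mu.
Qed.

Lemma locus_cremona k x : k != 0 -> smooth_pt x ->
  locus (fun i => k * cremona (wedge_special x) i).
Proof.
move=> k_neq0 x_smooth.
apply: (locus_twist (mu := k * \prod_i wedge_special x i) x_smooth).
- by rewrite mulf_neq0 //; apply/prodf_neq0 => i _; apply/smooth_ptP.
- by move=> i; rewrite -mulrA cremona_mul.
Qed.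

Lemma twist_trivial_uniq a x y : smooth_pt x -> smooth_pt y ->
  twist_trivial a x -> twist_trivial a y -> samept x y.
Proof.
move=> x_smooth y_smooth /(twist_trivialP _ x_smooth) [mu mu_neq0 ax].
move=> /(twist_trivialP _ y_smooth) [nu _ ay].
have a_neq0 i : a i != 0.
  by apply: contraNneq mu_neq0 => ai0; rewrite -(ax i) ai0 mul0r.
have : a 0 * a 2 * wedge x y = 0.
  have [x0 _ x2] := wedge_specialE x; have [y0 _ y2] := wedge_specialE y.
  transitivity ((a 0 * wedge_special x 0) * (a 2 * wedge_special y 2)
              - (a 2 * wedge_special x 2) * (a 0 * wedge_special y 0)).
    by rewrite x0 x2 y0 y2 /wedge; ring.
  by rewrite !ax !ay subrr.
by move/eqP; rewrite !mulf_eq0 !(negPf (a_neq0 _)) samept_wedge.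
Qed.

Definition conic : {mpoly F[3]} := 'X_0 * 'X_2 - 'X_1 * 'X_2 - 'X_0 * 'X_1.

Lemma conicE p : conic.@[p] = p 0 * p 2 - p 1 * p 2 - p 0 * p 1.
Proof. by rewrite /conic !(mevalB, mevalM, mevalXU). Qed.

Lemma conic_homog : conic \is 2.-homog.
Proof.
have X_homog i : ('X_i : {mpoly F[3]}) \is 1.-homog.
  by rewrite dhomogX; apply/eqP; exact: mdeg1.
by rewrite !rpredB // (dhomogM (X_homog _) (X_homog _)).
Qed.

Lemma conic_neq0 : conic != 0.
Proof.
apply/eqP => /(congr1 (meval (fun i : 'I_3 => (i != 1)%:R))).
by rewrite conicE meval0 /= mulr0 mul0r !subr0 mulr1 => /eqP; rewrite oner_eq0.
Qed.

Lemma conic_coordpt j : conic.@[coordpt F j] = 0.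
Proof. by elim/ord3_ind: j; rewrite conicE /coordpt /= ?mulr0 ?mul0r ?subr0. Qed.

Lemma conic_locus a : locus a -> conic.@[a] = 0.
Proof.
case=> _ [x [x_smooth /(twist_trivialP _ x_smooth) [mu _ aw]]].
have /smooth_ptP w_neq0 := x_smooth.
set w := wedge_special x in aw w_neq0.
have : conic.@[a] * (w 0 * w 1 * w 2) = 0.
  transitivity ((a 0 * w 0) * (a 2 * w 2) * w 1 - (a 1 * w 1) * (a 2 * w 2) * w 0
              - (a 0 * w 0) * (a 1 * w 1) * w 2); first by rewrite conicE; ring.
  by rewrite !aw [w 1]wedge_special_add -/w; ring.
by move/eqP; rewrite !mulf_eq0 !(negPf (w_neq0 _)) !orbF => /eqP.
Qed.

Lemma conic_cremona p : nonzero3 p -> conic.@[p] = 0 ->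
  exists k x, k != 0 /\ p =1 (fun i => k * cremona (wedge_special x) i).
Proof.
rewrite conicE => p_neq0 p_conic.
have [s_eq0 | s_neq0] := eqVneq (p 0 + p 2) 0.
  have p2E : p 2 = - p 0 by apply/eqP; rewrite -addr_eq0 addrC s_eq0.
  have /eqP : - p 0 ^+ 2 = 0 by rewrite -p_conic p2E; ring.
  rewrite oppr_eq0 expf_eq0 /= => /eqP p0_eq0.
  have p1_neq0 : p 1 != 0.
    by case: p_neq0 => i; elim/ord3_ind: i; rewrite ?p2E ?p0_eq0 ?oppr0 ?eqxx.
  exists (- p 1), (special F 1); split; first by rewrite oppr_eq0.
  have [w0 w1 w2] := wedge_specialE (special F 1).
  have [c0 c1 c2] := cremonaE (wedge_special (special F 1)).
  by elim/ord3_ind; rewrite ?(c0, c1, c2) ?(w0, w1, w2) ?p2E ?p0_eq0 /=; ring.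
exists (p 0 + p 2)^-1, (- p 2, p 0); split; first by rewrite invr_eq0.
have [w0 w1 w2] := wedge_specialE (- p 2, p 0).
have [c0 c1 c2] := cremonaE (wedge_special (- p 2, p 0)).
have p1E : p 1 = p 0 * p 2 / (p 0 + p 2).
  apply: (canRL (mulfK s_neq0)); apply/eqP; rewrite eq_sym -subr_eq0; apply/eqP.
  by rewrite -p_conic; ring.
by elim/ord3_ind; rewrite ?(c0, c1, c2) ?(w0, w1, w2) ?p1E /=; field.
Qed.

End Twists.

Lemma eq_in_closure (F : fieldType) (p q : 'I_3 -> F) :
  p =1 q -> in_closure q -> in_closure p.
Proof. by move=> pq q_closure G /q_closure; rewrite (meval_eq _ pq). Qed.

Section Closure.
Variable F : numFieldType.

Lemma poly_eq0_of_horner (g : {poly F}) : (forall t, g.[t] = 0) -> g = 0.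
Proof.
move=> g0; apply: (@roots_geq_poly_eq0 _ g [seq k%:R | k <- iota 0 (size g)]).
- by apply/allP => t /mapP [k _ ->]; rewrite /root g0.
- by rewrite map_inj_uniq ?iota_uniq // => m n /eqP; rewrite eqr_nat => /eqP.
- by rewrite size_map size_iota.
Qed.

Lemma smooth_pt21 : smooth_pt ((2%:R, 1) : P1rep F).
Proof.
apply/smooth_ptP; have [w0 w1 w2] := wedge_specialE ((2%:R, 1) : P1rep F).
elim/ord3_ind; rewrite ?(w0, w1, w2) /=.
- by rewrite oppr_eq0 pnatr_eq0.
- by rewrite subr_eq0 (eqr_nat F 1 2).
- exact: oner_neq0.
Qed.

Lemma in_closure_curve (g : 'I_3 -> {poly F}) (h : {poly F}) t0 : h != 0 ->
  (forall t, h.[t] != 0 -> locus (fun i => (g i).[t])) ->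
  in_closure (fun i => (g i).[t0]).
Proof.
move=> h_neq0 g_locus G G_locus; rewrite -horner_mmap.
suff /eqP : mmap polyC g G * h = 0.
  by rewrite mulf_eq0 (negPf h_neq0) orbF => /eqP ->; rewrite horner0.
apply: poly_eq0_of_horner => t; rewrite hornerM horner_mmap.
by have [->|/g_locus/G_locus ->] := eqVneq h.[t] 0; rewrite ?mulr0 ?mul0r.
Qed.

Lemma in_closure_cremona (k : F) (x : P1rep F) : k != 0 ->
  in_closure (fun i => k * cremona (wedge_special x) i).
Proof.
move=> k_neq0.
pose d : P1rep F := (2%:R, 1).
have /smooth_ptP d_neq0 := smooth_pt21.
pose line t : P1rep F := (x.1 + t * d.1, x.2 + t * d.2).
pose l j : {poly F} := (wedge_special x j)%:P + wedge_special d j *: 'X.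
have lE j t : (l j).[t] = wedge_special (line t) j.
  by rewrite hornerD hornerC hornerZ hornerX /wedge_special /wedge /=; ring.
have curveE t i : (k%:P * cremona l i).[t] = k * cremona (wedge_special (line t)) i.
  by rewrite hornerCM horner_cremona; congr (_ * _); apply: eq_bigr => j _; rewrite lE.
have l_neq0 j : l j != 0.
  apply: contraNneq (d_neq0 j) => /(congr1 (fun q : {poly F} => q`_1)).
  by rewrite coefD coefC coefZ coefX add0r mulr1 coef0 => ->.
apply: (eq_in_closure _ (@in_closure_curve (fun i => k%:P * cremona l i) (\prod_j l j) 0 _ _))
  => [i | | t].
- by rewrite curveE /line !mul0r !addr0 -surjective_pairing.
- exact/prodf_neq0.
- rewrite horner_prod => /prodf_neq0 line_smooth.
  apply: (eq_locus (curveE t)); apply: locus_cremona => //.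
  by apply/smooth_ptP => j; rewrite -lE; apply: line_smooth.
Qed.

Lemma in_closure_conic p : nonzero3 p -> in_closure p <-> (conic F).@[p] = 0.
Proof.
move=> p_neq0; split=> [|/(conic_cremona p_neq0) [k [x [k_neq0 pE]]]].
  by apply; apply: conic_locus.
exact: eq_in_closure pE (in_closure_cremona x k_neq0).
Qed.

End Closure.

Theorem mainTheorem3 (R : rcfType) :
  (* uniqueness of the point x *)
  (forall (a : 'I_3 -> R[i]) (x y : P1rep R[i]), glue_ok a ->
      smooth_pt x -> smooth_pt y -> twist_trivial a x -> twist_trivial a y ->
      samept x y) /\
  (* Z is a conic through the three coordinate points *)
  exists Q : {mpoly R[i][3]},
    [/\ Q != 0, Q \is 2.-homog,
        (forall p : 'I_3 -> R[i], nonzero3 p -> (in_closure p <-> Q.@[p] = 0))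
      & forall j : 'I_3, Q.@[coordpt R[i] j] = 0].
Proof.
(* glue_ok a already follows from twist_trivial a x *)
split=> [a x y _ | ]; first exact: twist_trivial_uniq.
exists (conic R[i]); split.
- exact: conic_neq0.
- exact: conic_homog.
- exact: in_closure_conic.
- exact: conic_coordpt.
Qed.
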